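(* Let $M$ be a layered Markov Transition Model, $\pi_e$ a deterministic evaluation policy, $\Phi$ any aggregation scheme, and let the offline distribution be admissible: $\mu_h(x,a)=d_h^{\pi_b}(x;M)\pi_b(a|x)$ for all $h\in[H]$ and some policy $\pi_b$. Suppose $\frac{1}{\pi_b(\pi_e(x)|x)}\le\mathsf{C}_{\mathcal{A}}$ for all $x\in\mathcal{X}$. Then for every $\epsilon>0$ (for which the maximum defining $\bar{\mathsf{C}}_\epsilon$ is over a nonempty set), $\bar{\mathsf{C}}_\epsilon(M,\Phi,\mu)\le(\mathsf{C}_{\mathcal{A}})^H$.
   Context: Markov Transition Model $M=(\mathcal{X},\mathcal{A},T,H,\rho)$ with finite layered state space $\mathcal{X}_1\cup\dots\cup\mathcal{X}_H$, finite actions, $T(\cdot|x,a)$ supported on $\mathcal{X}_{h+1}$ for $x\in\mathcal{X}_h$, $\rho\in\Delta(\mathcal{X}_1)$. $d_h^\pi(x;M)=\Pr(x_h=x)$ under $x_1\sim\rho$, $a_h\sim\pi(\cdot|x_h)$, $x_{h+1}\sim T(\cdot|x_h,a_h)$. Aggregation scheme: $\Phi=\Phi_1\cup\dots\cup\Phi_H$, $\Phi_h$ a partition of $\mathcal{X}_h$. Aggregated transitions, for $\phi\in\Phi_h,\phi'\in\Phi_{h+1}$: $\bar T(\phi'|\phi,\pi)=\frac{\sum_{x\in\phi}\sum_{x'\in\phi'}\sum_a\pi(a|x)\mu_h(x,a)T(x'|x,a)}{\sum_{x\in\phi}\sum_a\pi(a|x)\mu_h(x,a)}$. Aggregated occupancy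 $\bar d_h^\pi(\phi)$: law of $\phi_h$ under $\phi_1\sim\bar\rho$, $\phi_{i+1}\sim\bar T(\cdot|\phi_i,\pi)$, with $\bar\rho(\phi)=\sum_{x\in\phi}\rho(x)$. Aggregated concentrability: $\bar{\mathsf{C}}_\epsilon(M,\Phi,\mu)=\max_h\max\{\frac{\sum_{\phi\in\mathcal{I}}\bar d_h^{\pi_e}(\phi)}{\sum_{\phi\in\mathcal{I}}\sum_{x\in\phi}\mu_h(x,\pi_e(x))}:\mathcal{I}\subseteq\Phi_h,\ \sum_{\phi\in\mathcal{I}}\bar d_h^{\pi_e}(\phi)\ge\epsilon\}$. *)

From HB Require Import structures.
From mathcomp Require Import all_boot all_order all_algebra.
Set Implicit Arguments. Unset Strict Implicit. Unset Printing Implicit Defensive.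
Import Order.TTheory GRing.Theory Num.Theory.
Local Open Scope ring_scope.

(* Layers are numbered 1..H (nat). A (stochastic) policy is pi : X -> A -> R,
   pi x a = pi(a|x).  Transition kernel T x a x' = T(x'|x,a). *)

(* Occupancy d_h^pi(x; M), h >= 1 (d_0 := 0, unused). *)
Fixpoint occ (R : ringType) (X A : finType) (rho : X -> R)
  (T : X -> A -> X -> R) (pi : X -> A -> R) (h : nat) (x : X) : R :=
  match h with
  | 0 => 0
  | h'.+1 =>
      if h' is 0 then rho x
      else \sum_(x0 : X) occ rho T pi h' x0 * (\sum_(a : A) pi x0 a * T x0 a x)
  end.

Definition Tbar (R : fieldType) (X A : finType) (T : X -> A -> X -> R)
  (mu : nat -> X -> A -> R) (pi : X -> A -> R) (h : nat)
  (phi phi' : {set X}) : R :=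
  (\sum_(x in phi) \sum_(x' in phi') \sum_(a : A) pi x a * mu h x a * T x a x')
  / (\sum_(x in phi) \sum_(a : A) pi x a * mu h x a).

Fixpoint dbar (R : fieldType) (X A : finType) (rho : X -> R)
  (T : X -> A -> X -> R) (mu : nat -> X -> A -> R)
  (Phi : nat -> {set {set X}}) (pi : X -> A -> R) (h : nat) (phi : {set X}) : R :=
  match h with
  | 0 => 0
  | h'.+1 =>
      if h' is 0 then \sum_(x in phi) rho x
      else \sum_(phi0 in Phi h')
             dbar rho T mu Phi pi h' phi0 * Tbar T mu pi h' phi0 phi
  end.

Definition det_policy (R : ringType) (X A : finType) (pe : X -> A) : X -> A -> R :=
  fun x a => (a == pe x)%:R.

(* Aggregated concentrability  Cbar_eps(M, Phi, mu): maximum over h in [H] and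
   I subset Phi_h with sum_{phi in I} dbar_h^{pi_e}(phi) >= eps of the ratio.
   (Max taken with neutral 0; all ratios are >= 0, and the theorem assumes the
   index set is nonempty.) *)
Definition Cbar (R : realFieldType) (X A : finType) (H : nat) (rho : X -> R)
  (T : X -> A -> X -> R) (mu : nat -> X -> A -> R)
  (Phi : nat -> {set {set X}}) (pe : X -> A) (eps : R) : R :=
  \big[Num.max/0]_(1 <= h < H.+1)
    \big[Num.max/0]_(I : {set {set X}} |
        (I \subset Phi h) &&
        (eps <= \sum_(phi in I) dbar rho T mu Phi (det_policy R pe) h phi))
      ((\sum_(phi in I) dbar rho T mu Phi (det_policy R pe) h phi)
       / (\sum_(phi in I) \sum_(x in phi) mu h x (pe x))).

From HB Require Import structures.
From mathcomp Require Import all_boot all_order all_algebra.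
Set Implicit Arguments. Unset Strict Implicit. Unset Printing Implicit Defensive.
Import Order.TTheory GRing.Theory Num.Theory.
Local Open Scope ring_scope.

(* Writing w_h(x) := mu_h(x, pi_e(x)) = d_h^{pi_b}(x) pi_b(pi_e(x)|x), coverage gives
   d_h^{pi_b}(x) <= C_A w_h(x).  By induction on h one shows
   dbar_h^{pi_e}(phi) <= C_A^(h-1) sum_{x in phi} d_h^{pi_b}(x): the aggregated
   transition out of phi0 is the w-weighted average of T(.|x, pi_e(x)), so
   dbar_h(phi0) Tbar(phi|phi0) <= C_A^h sum_{x in phi0} w_h(x) T(phi|x, pi_e(x)),
   and summing over the partition Phi_h, the right-hand side is the pi_e-part of
   one step of the pi_b-occupancy, hence at most C_A^h d_{h+1}^{pi_b}(phi).
   Since mu_h(I) = sum_{x in I} w_h(x) >= C_A^{-1} d_h^{pi_b}(I), every ratio in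
   Cbar is at most C_A^h <= C_A^H. *)

Lemma occ_ge0 (R : numDomainType) (X A : finType) (rho : X -> R)
    (T : X -> A -> X -> R) (pi : X -> A -> R) :
  (forall x, 0 <= rho x) -> (forall x a x', 0 <= T x a x') ->
  (forall x a, 0 <= pi x a) -> forall h x, 0 <= occ rho T pi h x.
Proof.
move=> rho_ge0 T_ge0 pi_ge0; elim=> [|[|h] IH] x //=.
apply: sumr_ge0 => x0 _; rewrite mulr_ge0 ?IH //.
by apply: sumr_ge0 => a _; rewrite mulr_ge0.
Qed.

Lemma occSS (R : nzRingType) (X A : finType) (rho : X -> R)
    (T : X -> A -> X -> R) (pi : X -> A -> R) h x' :
  occ rho T pi h.+2 x' =
  \sum_(x : X) occ rho T pi h.+1 x * \sum_(a : A) pi x a * T x a x'.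
Proof. by []. Qed.

Lemma sum_det_policy (R : nzRingType) (X A : finType) (pe : X -> A) x (f : A -> R) :
  \sum_(a : A) det_policy R pe x a * f a = f (pe x).
Proof.
rewrite (bigD1 (pe x)) //= /det_policy eqxx mul1r big1 ?addr0 // => a /negbTE ->.
by rewrite mul0r.
Qed.

Lemma Tbar_det_policy (R : fieldType) (X A : finType) (T : X -> A -> X -> R)
    (mu : nat -> X -> A -> R) (pe : X -> A) h (phi phi' : {set X}) :
  Tbar T mu (det_policy R pe) h phi phi' =
  (\sum_(x in phi) \sum_(x' in phi') mu h x (pe x) * T x (pe x) x')
  / \sum_(x in phi) mu h x (pe x).
Proof.
rewrite /Tbar; congr (_ / _); apply: eq_bigr => x _; last first.
  by rewrite (eq_bigr (fun a => det_policy R pe x a * mu h x a)) ?sum_det_policy.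
apply: eq_bigr => x' _.
by rewrite (eq_bigr (fun a => det_policy R pe x a * (mu h x a * T x a x')))
  ?sum_det_policy // => a _; rewrite mulrA.
Qed.

Lemma ler_mul_ratio (R : numFieldType) (a c N S : R) :
  0 <= c -> 0 <= N -> 0 <= S -> a <= c * S -> a * (N / S) <= c * N.
Proof.
move=> c_ge0 N_ge0; rewrite le_eqVlt => /predU1P[<- _|S_gt0 le_a].
  by rewrite invr0 !mulr0 mulr_ge0.
by rewrite mulrA ler_pdivrMr // mulrAC ler_wpM2r.
Qed.

Lemma sum_trivIset_le (R : numDomainType) (T : finType) (P : {set {set T}})
    (f : T -> R) :
  trivIset P -> (forall x, 0 <= f x) ->
  \sum_(B in P) \sum_(x in B) f x <= \sum_(x : T) f x.
Proof.
move=> trivP f_ge0; rewrite -big_trivIset // [leRHS](bigID [in cover P]) /=.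
by rewrite lerDl sumr_ge0.
Qed.

Section AdmissibleOccupancy.

Variables (R : realFieldType) (X A : finType) (H : nat).
Variables (rho : X -> R) (T : X -> A -> X -> R) (Phi : nat -> {set {set X}}).
Variables (pe : X -> A) (pb : X -> A -> R) (mu : nat -> X -> A -> R) (CA : R).

Hypothesis rho_ge0 : forall x, 0 <= rho x.
Hypothesis T_ge0 : forall x a x', 0 <= T x a x'.
Hypothesis pb_ge0 : forall x a, 0 <= pb x a.
Hypothesis Phi_trivI : forall h, (1 <= h <= H)%N -> trivIset (Phi h).
Hypothesis mu_admissible :
  forall h x a, (1 <= h <= H)%N -> mu h x a = occ rho T pb h x * pb x a.
Hypothesis coverage : forall x, 1 <= CA * pb x (pe x).
Hypothesis CA_ge1 : 1 <= CA.

Local Notation occb := (occ rho T pb).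
Local Notation dbare := (dbar rho T mu Phi (det_policy R pe)).

Let occb_ge0 h x : 0 <= occb h x. Proof. exact: occ_ge0. Qed.
Let CA_ge0 : 0 <= CA. Proof. exact: le_trans CA_ge1. Qed.

Lemma mu_pe_ge0 h x : (1 <= h <= H)%N -> 0 <= mu h x (pe x).
Proof. by move=> hH; rewrite mu_admissible // mulr_ge0. Qed.

Lemma occ_le_mu_pe h (S : pred X) : (1 <= h <= H)%N ->
  \sum_(x in S) occb h x <= CA * \sum_(x in S) mu h x (pe x).
Proof.
move=> hH; rewrite mulr_sumr; apply: ler_sum => x _.
by rewrite mu_admissible // mulrCA ler_peMr.
Qed.

Lemma mu_pe_flow_le h x' : (1 <= h <= H)%N ->
  \sum_(x : X) mu h x (pe x) * T x (pe x) x' <= occb h.+1 x'.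
Proof.
case: h => // h hH; rewrite occSS; apply: ler_sum => x _.
rewrite mu_admissible // -mulrA ler_wpM2l //.
by rewrite (bigD1 (pe x)) //= lerDl sumr_ge0 // => a _; rewrite mulr_ge0.
Qed.

Lemma dbar_le_occ k (phi : {set X}) : (k < H)%N ->
  dbare k.+1 phi <= CA ^+ k * \sum_(x in phi) occb k.+1 x.
Proof.
elim: k phi => [|k IH] phi kH; first by rewrite expr0 mul1r.
have kH' : (1 <= k.+1 <= H)%N by exact: ltnW kH.
pose flow (phi0 : {set X}) :=
  \sum_(x in phi0) \sum_(x' in phi) mu k.+1 x (pe x) * T x (pe x) x'.
have step phi0 : dbare k.+1 phi0 * Tbar T mu (det_policy R pe) k.+1 phi0 phi
    <= CA ^+ k.+1 * flow phi0.
  rewrite Tbar_det_policy; apply: ler_mul_ratio.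
  - exact: exprn_ge0.
  - by do 2![apply: sumr_ge0 => ? _]; rewrite mulr_ge0 ?mu_pe_ge0.
  - by apply: sumr_ge0 => x _; apply: mu_pe_ge0.
  - rewrite exprSr -mulrA; apply: le_trans (IH _ (ltnW kH)) _.
    by rewrite ler_wpM2l ?exprn_ge0 ?occ_le_mu_pe.
rewrite [dbare _ _]/=; apply: le_trans (ler_sum _ (fun phi0 _ => step phi0)) _.
rewrite -mulr_sumr ler_wpM2l ?exprn_ge0 //.
apply: le_trans (sum_trivIset_le
  (f := fun x => \sum_(x' in phi) mu k.+1 x (pe x) * T x (pe x) x') (Phi_trivI kH') _) _.
  by move=> x; apply: sumr_ge0 => x' _; rewrite mulr_ge0 ?mu_pe_ge0.
by rewrite exchange_big; apply: ler_sum => x' _; apply: mu_pe_flow_le.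
Qed.

Lemma dbar_ratio_le k (I : {set {set X}}) : (k < H)%N ->
  (\sum_(phi in I) dbare k.+1 phi) / (\sum_(phi in I) \sum_(x in phi) mu k.+1 x (pe x))
  <= CA ^+ H.
Proof.
move=> kH; apply: le_trans (ler_weXn2l CA_ge1 kH); rewrite -[_^-1]mul1r -[leRHS]mulr1.
apply: ler_mul_ratio => //; first exact: exprn_ge0.
  by do 2![apply: sumr_ge0 => ? _]; apply: mu_pe_ge0.
rewrite exprSr -mulrA [CA * _]mulr_sumr mulr_sumr; apply: ler_sum => phi _.
by apply: le_trans (dbar_le_occ _ kH) _; rewrite ler_wpM2l ?exprn_ge0 ?occ_le_mu_pe.
Qed.

Lemma Cbar_le_pow eps : Cbar H rho T mu Phi pe eps <= CA ^+ H.
Proof.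
have CAH_ge0 : 0 <= CA ^+ H by exact: exprn_ge0.
rewrite /Cbar big_nat_cond; apply: bigmax_le => // -[|k] /andP[/andP[] //] _ kH _.
by apply: bigmax_le => // I _; apply: dbar_ratio_le.
Qed.

End AdmissibleOccupancy.

Theorem mainTheorem9 (R : realFieldType) (X A : finType) (H : nat)
  (layer : X -> nat) (rho : X -> R) (T : X -> A -> X -> R)
  (Phi : nat -> {set {set X}}) (pe : X -> A) (pb : X -> A -> R)
  (mu : nat -> X -> A -> R) (CA eps : R) :
  (* layered Markov transition model *)
  (forall x, (1 <= layer x <= H)%N) ->
  (forall x, 0 <= rho x) -> \sum_(x : X) rho x = 1 ->
  (forall x, rho x != 0 -> layer x = 1%N) ->
  (forall x a x', 0 <= T x a x') ->
  (forall x a, (layer x < H)%N -> \sum_(x' : X) T x a x' = 1) ->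
  (forall x a x', (layer x < H)%N -> T x a x' != 0 -> layer x' = (layer x).+1) ->
  (* aggregation scheme: Phi_h is a partition of X_h *)
  (forall h, (1 <= h <= H)%N -> partition (Phi h) [set x | layer x == h]) ->
  (* behaviour policy and admissible offline distribution *)
  (forall x a, 0 <= pb x a) -> (forall x, \sum_(a : A) pb x a = 1) ->
  (forall h x a, (1 <= h <= H)%N -> mu h x a = occ rho T pb h x * pb x a) ->
  (* action coverage *)
  (forall x, 0 < pb x (pe x) /\ 1 / pb x (pe x) <= CA) ->
  0 < eps ->
  (* the set over which the maximum is taken is nonempty *)
  (exists h (I : {set {set X}}), (1 <= h <= H)%N /\ I \subset Phi h /\
      eps <= \sum_(phi in I) dbar rho T mu Phi (det_policy R pe) h phi) ->
  Cbar H rho T mu Phi pe eps <= CA ^+ H.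
Proof.
move=> _ rho_ge0 rho_sum1 _ T_ge0 _ _ Phi_part pb_ge0 pb_sum1 mu_adm cov _ _.
have [x0 _] : exists x0 : X, true.
  case: (pickP (fun _ : X => true)) => [x0|X0]; first by exists x0.
  by move: rho_sum1; rewrite big_pred0 // => /eqP; rewrite eq_sym oner_eq0.
have CA_ge1 : 1 <= CA.
  have [pb_gt0 le_CA] := cov x0; apply: le_trans le_CA; rewrite ler_pdivlMr // mul1r.
  by rewrite -(pb_sum1 x0) (bigD1 (pe x0)) //= lerDl sumr_ge0.
apply: (Cbar_le_pow (pb := pb)) => // [h hH|x].
  by have /and3P[] := Phi_part h hH.
by have [pb_gt0 le_CA] := cov x; rewrite -ler_pdivrMr.
Qed.
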